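(* Let $(K,\mathrm{val})$ be a $2$-henselian valued field whose residue class field $F$ has characteristic $\neq2$, let $A$ be a subring with $B\subseteq A\subseteq K$ and $H=\mathrm{val}(A^\times)$. Let $(M_g)_{g\in H\cup G_{\ge e}}$ be a family of quasi-quadratic modules in $F$ such that $M_g\subseteq M_h$ whenever either (i) $g\le h$ and $\overline g=\overline h$, or (ii) $M_g=F$ and ($[g]=[h]$ or $g\le h$). Then $\bigcup_{g\in H\cup G_{\ge e}}\Phi^A(M_g,[\![g]\!])$ is a quasi-quadratic module in $A$.
   Context: Let $(G,\le)$ be a totally ordered abelian group written multiplicatively with identity $e$; $G_{\ge e}=\{g\in G:g\ge e\}$, $G^2=\{g^2:g\in G\}$. Let $(K,\mathrm{val})$ be a valued field with surjective valuation $\mathrm{val}:K\to G\cup\{\infty\}$, valuation ring $B=\{x:\mathrm{val}(x)\ge e\}$, residue map $\pi:B\to F$, residue field $F$. A strict unit is $x\in B^\times$ with $\pi(x)=1$; when $\mathrm{char}F\ne2$, $2$-henselian is equivalent to every strict unit being a square in $K$. For a subring $A$ with $B\subseteq A\subseteq K$ put $H=\mathrm{val}(A^\times)$; $H$ is a convex subgroup of $G$ and $\mathrm{val}(A\setminus\{0\})=H\cup G_{\ge e}$. For $g\in G$: $\overline g$ is its class in $G/G^2$, $[\![g]\!]$ its class in $G/H^2$, $[g]$ its class in $G/H$; ''$\mathrm{val}(x)=\overline g$'' means $\overline{\mathrm{val}(x)}=\overline g$, similarly for $[\![\cdot]\!]$. A quasi-quadratic module in a commutative ring $R$ is a subset $M\subseteq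 R$ with $M+M\subseteq M$ and $a^2M\subseteq M$ for all $a\in R$. A pseudo-angular component map is a map $\mathrm{p.an}:K^\times\to F^\times$ such that: (1) $\mathrm{p.an}(u)=\pi(u)$ for $u\in B^\times$; (2) $\mathrm{p.an}(ux)=\pi(u)\mathrm{p.an}(x)$ for $u\in B^\times,x\in K^\times$; (3) for all $g\in G$, $c\in F^\times$ there is $w\in K$ with $\mathrm{val}(w)=g$, $\mathrm{p.an}(w)=c$; (4) for nonzero $x_1,x_2$ with $x_1+x_2\ne0$: if $\mathrm{val}(x_1)<\mathrm{val}(x_2)$ then $\mathrm{p.an}(x_1+x_2)=\mathrm{p.an}(x_1)$; if $\mathrm{val}(x_1)=\mathrm{val}(x_2)$ and $\mathrm{p.an}(x_1)+\mathrm{p.an}(x_2)\ne0$ then $\mathrm{val}(x_1+x_2)=\mathrm{val}(x_1)$ and $\mathrm{p.an}(x_1+x_2)=\mathrm{p.an}(x_1)+\mathrm{p.an}(x_2)$; (5) if $x,y\in K^\times$, $\overline{\mathrm{val}(x)}=\overline{\mathrm{val}(y)}$ and $\mathrm{p.an}(x)=\mathrm{p.an}(y)$ then $y=u^2x$ for some $u\in K^\times$; (6) for $a,u\in K^\times$ there is $k\in F^\times$ with $\mathrm{p.an}(au^2)=\mathrm{p.an}(a)k^2$. Such a map exists under the hypotheses; fix one. For $g\in G$ and a quasi-quadratic module $M$ in $F$: $$\Phi^A(M,[\![g]\!])=\{x\in A\setminus\{0\}:\ \mathrm{val}(x)=\overline g,\ (\mathrm{val}(x)=[\![g]\!]\ \text{or}\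 \mathrm{val}(x)>g),\ \mathrm{p.an}(x)\in M\}\cup\{0\}.$$ *)

From mathcomp Require Import all_boot all_order all_algebra.
Set Implicit Arguments. Unset Strict Implicit. Unset Printing Implicit Defensive.
Import GRing.Theory.
Local Open Scope ring_scope.

(* Totally ordered abelian group.  The paper writes G multiplicatively     *)
(* with identity e; we write it ADDITIVELY (G : zmodType): e = 0, g h = g+h,*)
(* g^2 = g + g, G^2 = {g + g}.  The order is a Prop relation [le].          *)
Definition is_toag (G : zmodType) (le : G -> G -> Prop) : Prop :=
  [/\ (forall g, le g g),
      (forall g h, le g h -> le h g -> g = h),
      (forall g h k, le g h -> le h k -> le g k),
      (forall g h, le g h \/ le h g)
    & (forall g h k, le g h -> le (g + k) (h + k))].

Definition glt (G : zmodType) (le : G -> G -> Prop) (g h : G) : Prop :=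
  le g h /\ g <> h.

(* order on G ∪ {∞}, with None = ∞ *)
Definition ole (G : zmodType) (le : G -> G -> Prop) (a b : option G) : Prop :=
  match a, b with
  | _, None => True
  | None, Some _ => False
  | Some x, Some y => le x y
  end.

Definition olt (G : zmodType) (le : G -> G -> Prop) (a b : option G) : Prop :=
  ole le a b /\ a <> b.

Definition oadd (G : zmodType) (a b : option G) : option G :=
  match a, b with
  | Some x, Some y => Some (x + y)
  | _, _ => None
  end.

Definition is_valuation (G : zmodType) (le : G -> G -> Prop) (K : fieldType)
    (val : K -> option G) : Prop :=
  [/\ (forall x, val x = None <-> x = 0),
      (forall x y, val (x * y) = oadd (val x) (val y)),
      (forall x y, ole le (val x) (val (x + y)) \/ ole le (val y) (val (x + y)))
    & (forall g, exists x, val x = Some g)].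

Definition valB (G : zmodType) (le : G -> G -> Prop) (K : fieldType)
    (val : K -> option G) (x : K) : Prop := ole le (Some 0) (val x).

Definition unitB (G : zmodType) (K : fieldType) (val : K -> option G) (x : K) : Prop :=
  val x = Some 0.

Definition is_residue_map (G : zmodType) (le : G -> G -> Prop) (K F : fieldType)
    (val : K -> option G) (pi : K -> F) : Prop :=
  [/\ (forall x y, valB le val x -> valB le val y -> pi (x + y) = pi x + pi y),
      (forall x y, valB le val x -> valB le val y -> pi (x * y) = pi x * pi y),
      pi 1 = 1,
      (forall x, valB le val x -> (pi x = 0 <-> olt le (Some 0) (val x)))
    & (forall c, exists x, valB le val x /\ pi x = c)].

Definition strict_unit (G : zmodType) (K F : fieldType) (val : K -> option G)
    (pi : K -> F) (x : K) : Prop := unitB val x /\ pi x = 1.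

(* 2-henselian, in the form given in the paper for char F <> 2:
   every strict unit is a square in K. *)
Definition two_henselian (G : zmodType) (K F : fieldType) (val : K -> option G)
    (pi : K -> F) : Prop :=
  forall x, strict_unit val pi x -> exists y : K, x = y * y.

Definition is_subring_overB (G : zmodType) (le : G -> G -> Prop) (K : fieldType)
    (val : K -> option G) (A : K -> Prop) : Prop :=
  A 0 /\ A 1 /\
  (forall x y, A x -> A y -> A (x + y)) /\
  (forall x, A x -> A (- x)) /\
  (forall x y, A x -> A y -> A (x * y)) /\
  (forall x, valB le val x -> A x).

Definition Hgrp (G : zmodType) (K : fieldType) (val : K -> option G)
    (A : K -> Prop) (g : G) : Prop :=
  exists x, [/\ A x, x <> 0, A x^-1 & val x = Some g].

Definition eq_modG2 (G : zmodType) (g h : G) : Prop := exists k, g - h = k + k.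
Definition eq_modH2 (G : zmodType) (H : G -> Prop) (g h : G) : Prop :=
  exists k, H k /\ g - h = k + k.
Definition eq_modH (G : zmodType) (H : G -> Prop) (g h : G) : Prop := H (g - h).

Definition is_pan (G : zmodType) (le : G -> G -> Prop) (K F : fieldType)
    (val : K -> option G) (pi : K -> F) (pan : K -> F) : Prop :=
  (forall x, x <> 0 -> pan x <> 0) /\
      (forall u, unitB val u -> pan u = pi u) /\
      (forall u x, unitB val u -> x <> 0 -> pan (u * x) = pi u * pan x) /\
      (forall g c, c <> 0 -> exists w, val w = Some g /\ pan w = c) /\
      (forall x1 x2, x1 <> 0 -> x2 <> 0 -> x1 + x2 <> 0 ->
         (olt le (val x1) (val x2) -> pan (x1 + x2) = pan x1) /\
         (val x1 = val x2 -> pan x1 + pan x2 <> 0 ->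
            val (x1 + x2) = val x1 /\ pan (x1 + x2) = pan x1 + pan x2)) /\
      (forall x y gx gy, x <> 0 -> y <> 0 -> val x = Some gx -> val y = Some gy ->
         eq_modG2 gx gy -> pan x = pan y -> exists u, u <> 0 /\ y = u * u * x) /\
    (forall a u, a <> 0 -> u <> 0 ->
         exists k, k <> 0 /\ pan (a * (u * u)) = pan a * (k * k)).

(* quasi-quadratic module M in the ring R (R given as subset S of an
   ambient ring, S = predT for the whole ring) *)
Definition qq_module (R : nzRingType) (S : R -> Prop) (M : R -> Prop) : Prop :=
  [/\ (forall x, M x -> S x),
      (forall x y, M x -> M y -> M (x + y))
    & (forall a x, S a -> M x -> M (a * a * x))].

Definition PhiA (G : zmodType) (le : G -> G -> Prop) (K F : fieldType)
    (val : K -> option G) (pan : K -> F) (A : K -> Prop)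
    (M : F -> Prop) (g : G) (x : K) : Prop :=
  x = 0 \/
  (A x /\ x <> 0 /\ exists gx, [/\ val x = Some gx, eq_modG2 gx g,
      (eq_modH2 (Hgrp val A) gx g \/ glt le g gx) & M (pan x)]).

From mathcomp Require Import all_boot all_order all_algebra.
From mathcomp Require Import ring.
Import GRing.Theory.
Local Open Scope ring_scope.
Set Implicit Arguments. Unset Strict Implicit.

(* The values of the nonzero
   elements of A form the monoid H u G_{>=0} ([val_A]), closed under addition
   because H is a convex subgroup ([value_monoidD]).  The index condition of
   Phi, "val x = g mod G^2 and (val x = g mod H^2 or val x > g)", says exactly
   that val x - g = k + k with k in that monoid ([admissibleP]).  Hence
   multiplying x by a^2 keeps the index condition (k becomes val a + k) while
   pan changes by a square of F ([Phi_scale]).  For a sum x + y the summand of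
   smaller value dictates val and pan ([Phi_add_lt]); for equal values the
   angular parts add in M_h by hypothesis (i) ([Phi_add_same]), unless they
   cancel: then M_h contains c and -c, so M_h = F as char F <> 2
   ([qq_module_full]), and hypothesis (ii) makes the module indexed by
   val (x + y) full too ([PhiUnion_add_cancel]).  The residue map and 2-henselianity are only
   needed for the existence of pan, which is assumed here. *)

(* A quasi-quadratic module of a field of characteristic <> 2 containing both
   c and -c for some c <> 0 is the whole field, since
   t = ((t/c + 1)/2)^2 c + ((t/c - 1)/2)^2 (-c). *)
Lemma qq_module_full (F : fieldType) (M : F -> Prop) (c : F) :
  qq_module (fun _ => True) M -> (2%:R : F) <> 0 -> c <> 0 -> M c -> M (- c) ->
  forall t, M t.
Proof.
move=> [_ M_add M_sq] two_neq0 c_neq0 Mc Mnc t.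
have -> : t = ((t / c + 1) / 2%:R) * ((t / c + 1) / 2%:R) * c
              + ((t / c - 1) / 2%:R) * ((t / c - 1) / 2%:R) * (- c).
  by field; apply/andP; split; apply/eqP.
by apply: M_add; apply: M_sq.
Qed.

Lemma eq_modG2_trans (G : zmodType) (gx g h : G) :
  eq_modG2 gx g -> eq_modG2 gx h -> eq_modG2 g h.
Proof.
move=> [a ea] [b eb]; exists (b - a).
have -> : g - h = (gx - h) - (gx - g) by rewrite opprB [RHS]addrC addrA subrK.
by rewrite ea eb opprD addrACA.
Qed.

Section OrderedGroup.
Variables (G : zmodType) (le : G -> G -> Prop).
Hypothesis le_toag : is_toag le.

Lemma le_refl g : le g g. Proof. by case: le_toag. Qed.

Lemma le_anti g h : le g h -> le h g -> g = h.
Proof. by case: le_toag => _ anti _ _ _; apply: anti. Qed.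

Lemma le_trans g h k : le g h -> le h k -> le g k.
Proof. by case: le_toag => _ _ trans _ _; apply: trans. Qed.

Lemma le_total g h : le g h \/ le h g. Proof. by case: le_toag. Qed.

Lemma le_add2r k g h : le g h -> le (g + k) (h + k).
Proof. by case: le_toag => _ _ _ _; apply. Qed.

Lemma le_add2l k g h : le g h -> le (k + g) (k + h).
Proof. by rewrite ![k + _]addrC; apply: le_add2r. Qed.

Lemma subr_ge0 g h : le 0 (h - g) <-> le g h.
Proof.
by split=> l; [have := le_add2r g l | have := le_add2r (- g) l];
  rewrite ?add0r ?subrK ?subrr.
Qed.

Lemma subr_le0 g h : le (h - g) 0 <-> le h g.
Proof.
by split=> l; [have := le_add2r g l | have := le_add2r (- g) l];
  rewrite ?add0r ?subrK ?subrr.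
Qed.

Lemma le_oppr g h : le g h -> le (- h) (- g).
Proof. by move/subr_ge0=> l; apply/subr_ge0; rewrite opprK addrC. Qed.

Lemma le_double g : le 0 g -> le 0 (g + g).
Proof. by move=> l; have := le_add2r g l; rewrite add0r; apply: le_trans. Qed.

Lemma le_double_neg g : le g 0 -> le (g + g) 0.
Proof. by move=> l; have := le_add2r g l; rewrite add0r => /le_trans; apply. Qed.

Lemma double_eq0 (g : G) : g + g = 0 -> g = 0.
Proof.
move=> gg0; case: (le_total 0 g) => l; apply: le_anti => //;
  by have := le_add2r g l; rewrite add0r gg0.
Qed.

End OrderedGroup.

Section Valuation.
Variables (G : zmodType) (le : G -> G -> Prop) (K : fieldType)
  (val : K -> option G).
Hypotheses (le_toag : is_toag le) (val_valuation : is_valuation le val).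

Lemma val_eq0 x : val x = None <-> x = 0. Proof. by case: val_valuation. Qed.

Lemma val0 : val 0 = None. Proof. exact/val_eq0. Qed.

Lemma valM x y : val (x * y) = oadd (val x) (val y).
Proof. by case: val_valuation. Qed.

Lemma val_ultra x y :
  ole le (val x) (val (x + y)) \/ ole le (val y) (val (x + y)).
Proof. by case: val_valuation. Qed.

Lemma val_surj g : exists x, val x = Some g. Proof. by case: val_valuation. Qed.

Lemma val_nz x : x <> 0 -> exists g, val x = Some g.
Proof. by case ex: (val x) => [g|]; [exists g | move/val_eq0: ex]. Qed.

Lemma val_Some_neq0 x g : val x = Some g -> x <> 0.
Proof. by move=> ex x0; move: ex; rewrite x0 val0. Qed.

Lemma val1 : val 1 = Some 0.
Proof.
have [g eg] := val_nz (elimN eqP (oner_neq0 K)).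
have := valM 1 1; rewrite mulr1 eg => -[gg]; congr Some.
by apply: (@addrI _ g); rewrite addr0 -gg.
Qed.

Lemma valV x g : x <> 0 -> val x = Some g -> val x^-1 = Some (- g).
Proof.
move=> nx eg; have [m em] : exists m, val x^-1 = Some m.
  by apply: val_nz; apply/eqP; rewrite invr_eq0; apply/eqP.
have := valM x x^-1; rewrite mulfV; last exact/eqP.
rewrite val1 eg em => -[gm]; congr Some.
by apply: (@addrI _ g); rewrite subrr gm.
Qed.

Lemma valN x : val (- x) = val x.
Proof.
have valN1 : val (-1) = Some 0.
  have [m em] : exists m, val (-1) = Some m.
    by apply: val_nz; apply/eqP; rewrite oppr_eq0 oner_neq0.
  have := valM (-1) (-1); rewrite mulrNN mulr1 val1 em => -[mm]; congr Some.
  by apply: (double_eq0 le_toag); rewrite -mm.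
by rewrite -mulN1r valM valN1; case: (val x) => //= g; rewrite add0r.
Qed.

Lemma val_add_lt x y gx gy : val x = Some gx -> val y = Some gy ->
  glt le gx gy -> val (x + y) = Some gx.
Proof.
move=> ex ey [lxy nxy]; have := val_ultra x y; have := val_ultra (x + y) (- y).
rewrite addrK valN ex ey; case: (val (x + y)) => [gz|] /= up low; last first.
  by case: up => // /(le_anti le_toag lxy)/nxy.
congr Some; apply: (le_anti le_toag).
- by case: up => // /(le_anti le_toag lxy)/nxy.
- by case: low => // /(le_trans le_toag lxy).
Qed.

Lemma val_add_same x y g gz : val x = Some g -> val y = Some g ->
  val (x + y) = Some gz -> le g gz.
Proof. by move=> ex ey ez; have := val_ultra x y; rewrite ex ey ez => -[]. Qed.

End Valuation.

Section ValueMonoid.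
Variables (G : zmodType) (le : G -> G -> Prop) (K : fieldType)
  (val : K -> option G) (A : K -> Prop).
Hypotheses (le_toag : is_toag le) (val_valuation : is_valuation le val).
Hypothesis A_subring : is_subring_overB le val A.
Local Notation H := (Hgrp val A).

Lemma A0 : A 0. Proof. by case: A_subring. Qed.

Lemma A1 : A 1. Proof. by case: A_subring => _ []. Qed.

Lemma AD x y : A x -> A y -> A (x + y).
Proof. by case: A_subring => _ [_ [AD _]]; apply: AD. Qed.

Lemma AM x y : A x -> A y -> A (x * y).
Proof. by case: A_subring => _ [_ [_ [_ [AM _]]]]; apply: AM. Qed.

Lemma A_valB x : valB le val x -> A x.
Proof. by case: A_subring => _ [_ [_ [_ [_ AB]]]]; apply: AB. Qed.

Lemma H0 : H 0.
Proof.
exists 1; split; rewrite ?invr1; [exact: A1 | | exact: A1 |].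
- exact: (elimN eqP (oner_neq0 K)).
- exact: (val1 val_valuation).
Qed.

Lemma HN g : H g -> H (- g).
Proof.
move=> [x [Ax nx Axi ex]]; exists x^-1; split; rewrite ?invrK //.
- by apply/eqP; rewrite invr_eq0; apply/eqP.
- exact: (valV val_valuation nx ex).
Qed.

Lemma HD g h : H g -> H h -> H (g + h).
Proof.
move=> [x [Ax nx Axi ex]] [y [Ay ny Ayi ey]]; exists (x * y); split.
- exact: AM.
- by apply/eqP; rewrite mulf_neq0 //; apply/eqP.
- by rewrite invfM; apply: AM.
- by rewrite (valM val_valuation) ex ey.
Qed.

Lemma H_convex h k : H h -> le 0 k -> le k h -> H k.
Proof.
move=> [x [Ax nx Axi ex]] k_ge0 lkh; have [y ey] := val_surj val_valuation k.
have ny := val_Some_neq0 val_valuation ey.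
exists y; split=> //; first by apply: A_valB; rewrite /valB ey.
have -> : y^-1 = x^-1 * (x * y^-1) by rewrite mulrA mulVf ?mul1r //; apply/eqP.
apply: AM => //; apply: A_valB.
by rewrite /valB (valM val_valuation) ex (valV val_valuation ny ey) /=; apply/subr_ge0.
Qed.

Lemma val_A x g : A x -> x <> 0 -> val x = Some g -> H g \/ le 0 g.
Proof.
move=> Ax nx ex; case: (le_total le_toag 0 g) => l; [by right | left].
exists x; split=> //; apply: A_valB.
by rewrite /valB (valV val_valuation nx ex) /= -oppr0; apply: (le_oppr le_toag).
Qed.

(* H u G_{>=0} is closed under addition: a nonnegative element outside H
   dominates every element of H. *)
Lemma value_monoidD g h : H g \/ le 0 g -> H h \/ le 0 h -> H (g + h) \/ le 0 (g + h).
Proof.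
have mixed a b : H a -> le 0 b -> H (a + b) \/ le 0 (a + b).
  move=> Ha b_ge0; case: (le_total le_toag 0 (a + b)) => l; [by right | left].
  apply: HD => //; apply: H_convex (HN Ha) b_ge0 _.
  by apply/(subr_le0 le_toag); rewrite opprK addrC.
case=> [Hg | g_ge0] [Hh | h_ge0].
- by left; apply: HD.
- exact: mixed.
- by rewrite addrC; apply: mixed.
- right; apply: (le_trans le_toag h_ge0).
  by have := le_add2r le_toag h g_ge0; rewrite add0r.
Qed.

Definition admissible (g gx : G) : Prop :=
  exists k, gx - g = k + k /\ (H k \/ le 0 k).

Lemma admissibleP g gx :
  eq_modG2 gx g /\ (eq_modH2 H gx g \/ glt le g gx) <-> admissible g gx.
Proof.
split=> [[[k ek] [[m [Hm em]] | [lggx nggx]]] | [k [ek Hk]]].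
- by exists m; split=> //; left.
- exists k; split=> //; right; case: (le_total le_toag 0 k) => // lk0.
  case: nggx; apply: (le_anti le_toag lggx); apply/(subr_le0 le_toag).
  by rewrite ek; apply: (le_double_neg le_toag).
- split; first by exists k.
  case: Hk => [Hk | k_ge0]; first by left; exists k.
  case: (eqVneq k 0) => [k0 | nk0].
    by left; exists k; split=> //; rewrite k0; exact: H0.
  right; split.
    by apply/(subr_ge0 le_toag); rewrite ek; apply: (le_double le_toag).
  move=> ggx; move/eqP: nk0; apply; apply: (double_eq0 le_toag).
  by rewrite -ek ggx subrr.
Qed.

Lemma admissible_scale d g gx :
  H d \/ le 0 d -> admissible g gx -> admissible g (d + d + gx).
Proof.
move=> Md [k [ek Mk]]; exists (d + k); split; last exact: value_monoidD.
by rewrite -addrA ek addrACA.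
Qed.

Lemma admissible_above h gy gz :
  admissible h gy -> le gy gz -> eq_modH H h gz \/ le h gz.
Proof.
move=> [k [ek [Hk | k_ge0]]] lyz; last first.
  right; apply: (le_trans le_toag) lyz; apply/(subr_ge0 le_toag).
  by rewrite ek; apply: (le_double le_toag).
case: (le_total le_toag h gz) => lhz; [by right | left].
apply: (H_convex (HN (HD Hk Hk))); first exact/(subr_ge0 le_toag).
by rewrite -ek opprB; apply: (le_add2l le_toag); apply: (le_oppr le_toag).
Qed.

End ValueMonoid.

Section PseudoAngularComponent.
Variables (G : zmodType) (le : G -> G -> Prop) (K F : fieldType)
  (val : K -> option G) (pi pan : K -> F) (A : K -> Prop).
Hypotheses (le_toag : is_toag le) (val_valuation : is_valuation le val).
Hypothesis pan_axioms : is_pan le val pi pan.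
Hypothesis A_subring : is_subring_overB le val A.

Lemma pan_neq0 x : x <> 0 -> pan x <> 0.
Proof. by case: pan_axioms => pan_nz _; apply: pan_nz. Qed.

Lemma val_pan_add_lt x y gx gy : val x = Some gx -> val y = Some gy ->
  glt le gx gy -> val (x + y) = Some gx /\ pan (x + y) = pan x.
Proof.
move=> ex ey lxy; have exy := val_add_lt le_toag val_valuation ex ey lxy.
split=> //; case: pan_axioms => _ [_ [_ [_ [pan_add _]]]].
have [lt_case _] := pan_add x y (val_Some_neq0 val_valuation ex)
  (val_Some_neq0 val_valuation ey) (val_Some_neq0 val_valuation exy).
apply: lt_case; rewrite ex ey; case: lxy => lxy nxy.
by split; [exact: lxy | case=> /nxy].
Qed.

Lemma val_pan_add_same x y g : val x = Some g -> val y = Some g -> x + y <> 0 ->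
  pan x + pan y <> 0 -> val (x + y) = Some g /\ pan (x + y) = pan x + pan y.
Proof.
move=> ex ey nxy npxy; case: pan_axioms => _ [_ [_ [_ [pan_add _]]]].
have nx := val_Some_neq0 val_valuation ex; have ny := val_Some_neq0 val_valuation ey.
have [_ same] := pan_add x y nx ny nxy.
by rewrite -ex; apply: same; rewrite // ex ey.
Qed.

Lemma pan_mul_square a x : a <> 0 -> x <> 0 ->
  exists k, pan (a * a * x) = k * k * pan x.
Proof.
move=> na nx; case: pan_axioms => _ [_ [_ [_ [_ [_ pan_sq]]]]].
have [k [_ ek]] := pan_sq x a nx na.
by exists k; rewrite mulrC ek mulrC.
Qed.

Section Phi.
Variable M : F -> Prop.
Hypothesis M_qq : qq_module (fun _ => True) M.

Lemma Phi_full x g : A x -> val x = Some g -> (forall c, M c) ->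
  PhiA le val pan A M g x.
Proof.
move=> Ax ex Mfull; right; split=> //.
split; first exact: (val_Some_neq0 val_valuation ex).
exists g; split=> //; first by exists 0; rewrite subrr addr0.
by left; exists 0; split; [exact: (H0 val_valuation A_subring) | rewrite subrr addr0].
Qed.

Lemma Phi_scale g a x : A a -> PhiA le val pan A M g x ->
  PhiA le val pan A M g (a * a * x).
Proof.
move=> Aa [-> | [Ax [nx [gx [ex e2 eh Mx]]]]]; first by left; rewrite mulr0.
case: (eqVneq a 0) => [-> | /eqP na]; first by left; rewrite !mul0r.
have [ga ega] := val_nz val_valuation na.
have adm : admissible le val A g (ga + ga + gx).
  apply: (admissible_scale le_toag val_valuation A_subring
           (val_A le_toag val_valuation A_subring Aa na ega)).
  exact/(admissibleP le_toag val_valuation A_subring).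
have [e2' eh'] := (admissibleP le_toag val_valuation A_subring g _).2 adm.
right; split; first by apply: (AM A_subring) => //; apply: (AM A_subring).
split; first by apply/eqP; rewrite !mulf_neq0 //; apply/eqP.
exists (ga + ga + gx); split=> //; first by rewrite !(valM val_valuation) ega ex.
have [k ->] := pan_mul_square na nx.
by case: M_qq => _ _; apply.
Qed.

Lemma Phi_add_lt g x y gx gy : PhiA le val pan A M g x -> A y ->
  val x = Some gx -> val y = Some gy -> glt le gx gy ->
  PhiA le val pan A M g (x + y).
Proof.
move=> [-> | [Ax [_ [gx' [ex' e2 eh Mx]]]]] Ay ex ey lxy.
  by rewrite (val0 val_valuation) in ex.
move: ex'; rewrite ex => -[egx]; subst gx'.
have [exy pxy] := val_pan_add_lt ex ey lxy.
right; split; first exact: (AD A_subring).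
split; first exact: (val_Some_neq0 val_valuation exy).
by exists gx; rewrite pxy.
Qed.

Lemma Phi_add_same h x y gx : A x -> A y -> val x = Some gx -> val y = Some gx ->
  admissible le val A h gx -> M (pan x) -> M (pan y) ->
  x + y <> 0 -> pan x + pan y <> 0 -> PhiA le val pan A M h (x + y).
Proof.
move=> Ax Ay ex ey adm Mx My nxy npxy.
have [e2 eh] := (admissibleP le_toag val_valuation A_subring h _).2 adm.
have [exy pxy] := val_pan_add_same ex ey nxy npxy.
right; split; first exact: (AD A_subring).
split=> //; exists gx; split=> //; rewrite pxy.
by case: M_qq => _ M_add _; apply: M_add.
Qed.

End Phi.

End PseudoAngularComponent.

Section PhiUnion.
Variables (G : zmodType) (le : G -> G -> Prop) (K F : fieldType)
  (val : K -> option G) (pi pan : K -> F) (A : K -> Prop) (M : G -> F -> Prop).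
Hypotheses (le_toag : is_toag le) (val_valuation : is_valuation le val).
Hypothesis char_neq2 : (2%:R : F) <> 0.
Hypothesis pan_axioms : is_pan le val pi pan.
Hypothesis A_subring : is_subring_overB le val A.
Local Notation H := (Hgrp val A).
Hypothesis M_qq : forall g, H g \/ le 0 g -> qq_module (fun _ => True) (M g).
Hypothesis M_mono : forall g h, H g \/ le 0 g -> H h \/ le 0 h ->
  ((le g h /\ eq_modG2 g h) \/ ((forall c, M g c) /\ (eq_modH H g h \/ le g h))) ->
  forall c, M g c -> M h c.

Definition PhiUnion (x : K) : Prop :=
  exists g, (H g \/ le 0 g) /\ PhiA le val pan A (M g) g x.

Lemma PhiUnion0 : PhiUnion 0.
Proof. by exists 0; split; [right; exact: (le_refl le_toag) | left]. Qed.

Lemma PhiUnion_scale a x : A a -> PhiUnion x -> PhiUnion (a * a * x).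
Proof.
move=> Aa [g [Mg Phix]]; exists g; split=> //.
exact: (Phi_scale le_toag val_valuation pan_axioms A_subring (M_qq Mg) Aa Phix).
Qed.

(* Cancelling angular parts force M_h = F; hypothesis (ii) then makes the
   module indexed by the value of x + y full as well. *)
Lemma PhiUnion_add_cancel h x y gx : H h \/ le 0 h -> A x -> A y ->
  val x = Some gx -> val y = Some gx -> admissible le val A h gx ->
  M h (pan x) -> M h (pan y) -> x + y <> 0 -> pan x + pan y = 0 ->
  PhiUnion (x + y).
Proof.
move=> Mh Ax Ay ex ey adm Mhx Mhy nxy cancel.
have Mh_full : forall c, M h c.
  apply: (qq_module_full (M_qq Mh) char_neq2
           (pan_neq0 pan_axioms (val_Some_neq0 val_valuation ex)) Mhx).
  have -> : - pan x = pan y by apply/esym/eqP; rewrite -addr_eq0 addrC; apply/eqP.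
  exact: Mhy.
have [gz ez] := val_nz val_valuation nxy.
have Axy := AD A_subring Ax Ay.
have Mz := val_A le_toag val_valuation A_subring Axy nxy ez.
exists gz; split=> //; apply: (Phi_full pan val_valuation A_subring Axy ez).
move=> c; apply: (M_mono Mh Mz); last exact: Mh_full.
right; split=> //; apply: (admissible_above le_toag val_valuation A_subring adm).
exact: (val_add_same val_valuation ex ey ez).
Qed.

(* Two summands of equal value with indices g <= h: hypothesis (i) moves
   pan x into M_h, where the angular parts either add or cancel. *)
Lemma PhiUnion_add_same g h x y gx : H g \/ le 0 g -> H h \/ le 0 h -> le g h ->
  A x -> A y -> val x = Some gx -> val y = Some gx ->
  eq_modG2 gx g -> admissible le val A h gx -> M g (pan x) -> M h (pan y) ->
  PhiUnion (x + y).
Proof.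
move=> Mg Mh lgh Ax Ay ex ey e2x admy Mgx Mhy.
have [e2y _] := (admissibleP le_toag val_valuation A_subring h gx).2 admy.
have Mhx : M h (pan x).
  by apply: (M_mono Mg Mh) Mgx; left; split=> //; apply: eq_modG2_trans e2x e2y.
case: (eqVneq (x + y) 0) => [-> | /eqP nxy]; first exact: PhiUnion0.
case: (eqVneq (pan x + pan y) 0) => [cancel | /eqP ncancel].
  exact: (PhiUnion_add_cancel Mh Ax Ay ex ey admy).
exists h; split=> //.
exact: (Phi_add_same le_toag val_valuation pan_axioms A_subring (M_qq Mh)
         Ax Ay ex ey admy Mhx Mhy nxy ncancel).
Qed.

Lemma PhiUnion_add x y : PhiUnion x -> PhiUnion y -> PhiUnion (x + y).
Proof.
move=> [g [Mg Phix]] [h [Mh Phiy]].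
case: (Phix) => [-> | [Ax [_ [gx [ex e2x ehx Mgx]]]]]; first by rewrite add0r; exists h.
case: (Phiy) => [-> | [Ay [_ [gy [ey e2y ehy Mhy]]]]]; first by rewrite addr0; exists g.
have admP := admissibleP le_toag val_valuation A_subring.
have admx : admissible le val A g gx by exact/admP.
have admy : admissible le val A h gy by exact/admP.
case: (eqVneq gx gy) => [egxy | /eqP ngxy].
  subst gy; case: (le_total le_toag g h) => lgh.
    exact: (PhiUnion_add_same Mg Mh lgh Ax Ay ex ey e2x admy Mgx Mhy).
  by rewrite addrC; exact: (PhiUnion_add_same Mh Mg lgh Ay Ax ey ex e2y admx Mhy Mgx).
case: (le_total le_toag gx gy) => lxy.
  exists g; split=> //.
  exact: (Phi_add_lt le_toag val_valuation pan_axioms A_subring Phix Ay ex ey).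
exists h; split=> //; rewrite addrC.
apply: (Phi_add_lt le_toag val_valuation pan_axioms A_subring Phiy Ax ey ex).
by split=> // /esym.
Qed.

End PhiUnion.

Theorem mainTheorem8 (G : zmodType) (le : G -> G -> Prop)
    (K F : fieldType) (val : K -> option G) (pi : K -> F) (pan : K -> F)
    (A : K -> Prop) (M : G -> F -> Prop) :
  is_toag le ->
  is_valuation le val ->
  is_residue_map le val pi ->
  two_henselian val pi ->
  (2%:R : F) <> 0 ->
  is_pan le val pi pan ->
  is_subring_overB le val A ->
  (forall g, Hgrp val A g \/ le 0 g -> qq_module (fun _ => True) (M g)) ->
  (forall g h, Hgrp val A g \/ le 0 g -> Hgrp val A h \/ le 0 h ->
     ((le g h /\ eq_modG2 g h) \/
      ((forall c, M g c) /\ (eq_modH (Hgrp val A) g h \/ le g h))) ->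
     forall c, M g c -> M h c) ->
  qq_module A (fun x => exists g, (Hgrp val A g \/ le 0 g) /\
                                  PhiA le val pan A (M g) g x).
Proof.
move=> le_toag val_valuation _ _ char_neq2 pan_axioms A_subring M_qq M_mono.
split.
- by move=> x [g [_ [-> | [Ax _]]]]; [exact: (A0 A_subring) | exact: Ax].
- exact: (PhiUnion_add le_toag val_valuation char_neq2 pan_axioms A_subring
           M_qq M_mono).
- move=> a x Aa.
  exact: (PhiUnion_scale le_toag val_valuation pan_axioms A_subring M_qq Aa).
Qed.
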